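(* Let $O$, $A$, $\mathcal A_O$ be as in the context, and let $\Omega=\{\omega_1,\dots,\omega_N\}\subseteq A^m$. Let $R$ be a matrix over $O$ whose rows generate the left submodule $\bigcap_{i=1}^N\ker(\kappa_{\omega_i})\subseteq O^{1\times m}$. Then $\{g\in\mathcal A_O^m:R\bullet g=0\}$ is the VMPUM of $\Omega$: it contains $\Omega$, and it is contained in $\{g\in\mathcal A_O^m:R'\bullet g=0\}$ for every matrix $R'\in O^{r'\times m}$ with $R'\bullet\omega_i=0$ for all $i$.
   Context: Let $K$ be a field, $A=K[t_1,\dots,t_n]$, and $O=A[\partial_1;\sigma_1,\delta_1]\cdots[\partial_s;\sigma_s,\delta_s]$ a left Noetherian Ore algebra (iterated Ore extension with commuting $\partial_i$, commuting $\sigma_i,\delta_j$, injective $K$-algebra endomorphisms $\sigma_i$ and $\sigma_i$-derivations $\delta_i$ preserving $A$, $\sigma_i(\partial_j)=\partial_j$, $\delta_i(\partial_j)=0$; multiplication via $\partial_ia=\sigma_i(a)\partial_i+\delta_i(a)$). $A$ is a left $O$-module via $\partial_i\bullet p=\delta_i(p)$, $a\bullet p=ap$. $\mathcal A_O$ is a $K$-vector space of functions with a left $O$-module structure containing $A$ as an $O$-submodule. For $R\in O^{r\times m}$, $(R\bullet g)_i=\sum_jR_{ij}\bullet g_j$. For $p\in A^m$, $\ker(\kappa_p)=\{o\in O^{1\times m}:\sum_io_i\bullet p_i=0\}$ (the kernel of $[o_1,\dots,o_m]\mapsto\sum_io_i[p_i]\in O/{}_O\langle\partial_1,\dots,\partial_s\rangle$).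 A behavior is a set $\{g\in\mathcal A_O^m:R\bullet g=0\}$; the VMPUM of $\Omega$ is a behavior containing $\Omega$ and contained in every behavior containing $\Omega$. *)

From HB Require Import structures.
From mathcomp Require Import all_boot all_order all_algebra.
Set Implicit Arguments. Unset Strict Implicit. Unset Printing Implicit Defensive.
Import GRing.Theory.
Local Open Scope ring_scope.

Definition mxact (O : nzRingType) (V : lmodType O) (r m : nat)
  (R : 'M[O]_(r, m)) (g : 'I_m -> V) : 'I_r -> V :=
  fun i => \sum_(j < m) R i j *: g j.

Definition behavior (O : nzRingType) (V : lmodType O) (r m : nat)
  (R : 'M[O]_(r, m)) (g : 'I_m -> V) : Prop :=
  forall i : 'I_r, mxact R g i = 0.

Definition ker_kappa (O : nzRingType) (A : lmodType O) (m : nat)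
  (p : 'I_m -> A) (o : 'rV[O]_m) : Prop :=
  \sum_(j < m) o 0 j *: p j = 0.

Definition is_VMPUM (O : nzRingType) (V : lmodType O) (m : nat)
  (Omega : ('I_m -> V) -> Prop) (B : ('I_m -> V) -> Prop) : Prop :=
  [/\ (exists (r : nat) (R : 'M[O]_(r, m)), forall g, B g <-> behavior R g),
      (forall g, Omega g -> B g) &
      (forall (r' : nat) (R' : 'M[O]_(r', m)),
          (forall g, Omega g -> behavior R' g) ->
          forall g, B g -> behavior R' g)].

From HB Require Import structures.
From mathcomp Require Import all_boot all_order all_algebra.
Set Implicit Arguments. Unset Strict Implicit. Unset Printing Implicit Defensive.
Local Open Scope ring_scope.
Import GRing.Theory.

(* The rows of every annihilating matrix R' lie in the intersection of the
   kernels of the kappa_(omega_i), hence are left combinations x R of the rows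
   of R; since the action of matrices is associative, R g = 0 then forces
   R' g = (x R) g = x (R g) = 0. *)

Section MatrixAction.

Variables (O : nzRingType) (V : lmodType O).

Lemma mxact_row (r m : nat) (M : 'M[O]_(r, m)) (g : 'I_m -> V) (k : 'I_r) :
  mxact (row k M) g 0 = mxact M g k.
Proof. by apply: eq_bigr => j _; rewrite mxE. Qed.

Lemma mxact_mulmx (r s m : nat) (X : 'M[O]_(r, s)) (Y : 'M[O]_(s, m))
    (g : 'I_m -> V) (k : 'I_r) :
  mxact (X *m Y) g k = mxact X (mxact Y g) k.
Proof.
rewrite /mxact; under eq_bigr => j _ do rewrite mxE scaler_suml.
rewrite exchange_big /=; apply: eq_bigr => l _.
by rewrite scaler_sumr; apply: eq_bigr => j _; rewrite scalerA.
Qed.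

Lemma behavior_mulmx (r s m : nat) (X : 'M[O]_(r, s)) (Y : 'M[O]_(s, m))
    (g : 'I_m -> V) :
  behavior Y g -> behavior (X *m Y) g.
Proof. by move=> Yg k; rewrite mxact_mulmx; apply: big1 => l _; rewrite Yg scaler0. Qed.

Lemma behavior_kerP (r m : nat) (M : 'M[O]_(r, m)) (p : 'I_m -> V) :
  behavior M p <-> forall k : 'I_r, ker_kappa p (row k M).
Proof. by split=> Mp k; have := Mp k; rewrite -mxact_row. Qed.

End MatrixAction.

Section LinearTransport.

Variables (O : nzRingType) (U V : lmodType O) (f : {linear U -> V}).

Lemma mxact_linear (r m : nat) (M : 'M[O]_(r, m)) (g : 'I_m -> U) (k : 'I_r) :
  mxact M (fun j => f (g j)) k = f (mxact M g k).
Proof. by rewrite /mxact linear_sum; apply: eq_bigr => j _; rewrite linearZ. Qed.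

Lemma behavior_linear_inj (r m : nat) (M : 'M[O]_(r, m)) (g : 'I_m -> U) :
  injective f -> behavior M (fun j => f (g j)) <-> behavior M g.
Proof.
move=> f_inj; split=> Mg k; have := Mg k; rewrite mxact_linear.
  by rewrite -(linear0 f) => /f_inj.
by move->; rewrite linear0.
Qed.

End LinearTransport.

Theorem theorem4p5
  (O : nzRingType) (A AO : lmodType O)
  (iota : {linear A -> AO}) (iota_inj : injective iota)
  (m N r : nat) (omega : 'I_N -> ('I_m -> A))
  (R : 'M[O]_(r, m))
  (hR : forall o : 'rV[O]_m,
      (forall i : 'I_N, ker_kappa (omega i) o) <->
      (exists x : 'rV[O]_r, o = x *m R)) :
  is_VMPUM
    (fun g : 'I_m -> AO => exists i : 'I_N, g = (fun j => iota (omega i j)))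
    (behavior R).
Proof.
split; first by exists r, R.
- move=> _ [i ->]; apply/(behavior_linear_inj _ _ iota_inj)/behavior_kerP => l.
  by apply/(proj2 (hR _)); exists (delta_mx 0 l); rewrite rowE.
- move=> r' R' R'Omega g Rg k.
  have [x R'k] : exists x : 'rV[O]_r, row k R' = x *m R.
    apply/(proj1 (hR _)) => i.
    have /(behavior_linear_inj _ _ iota_inj)/behavior_kerP := R'Omega _ (ex_intro _ i erefl).
    exact.
  by rewrite -mxact_row R'k; apply: behavior_mulmx.
Qed.
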